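(* Let $\alpha\in(0,1)$, $m\ge1$, $a_0,\dots,a_{m-1}\in\mathbb{C}$, and let $\mathcal{S}$ be the set of solutions $x$ of $${}^LD^{m\circ\alpha}x(t)+a_{m-1}{}^LD^{(m-1)\circ\alpha}x(t)+\dots+a_1{}^LD^\alpha x(t)+a_0x(t)=0 .$$ Then $\mathcal{S}$ is a complex vector space of dimension $m$, and the map $x\mapsto(x(0),{}^LD^\alpha x(0),\dots,{}^LD^{(m-1)\circ\alpha}x(0))$ is an isomorphism $\mathcal{S}\to\mathbb{C}^m$.
   Context: Solutions are taken among functions $x:[0,\infty)\to\mathbb{C}$ given by power series $\sum_nx_nt^n$ convergent for all $t\ge0$, the equation holding for every $t\ge0$. L-fractional derivative: ${}^LD^\alpha x(t)=\frac{\Gamma(2-\alpha)}{t^{1-\alpha}}\cdot\frac{1}{\Gamma(1-\alpha)}\int_0^t (t-\tau)^{-\alpha}x'(\tau)d\tau$ for $t>0$; on such power series it acts termwise, ${}^LD^\alpha\sum_nx_nt^n=\sum_nx_{n+1}\frac{\Gamma(n+2)\Gamma(2-\alpha)}{\Gamma(n+2-\alpha)}t^n$, which also defines its value at $t=0$. ${}^LD^{k\circ\alpha}$ is the $k$-fold composition of ${}^LD^\alpha$. *)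

From Stdlib Require Import Reals List.
From Coquelicot Require Import Coquelicot.
Open Scope R_scope.

Definition Gamma (x : R) : R :=
  RInt_gen (fun t => Rpower t (x - 1) * exp (- t)) (at_right 0) (Rbar_locally p_infty).

(* Sum of a complex series (meaningful when the series converges). *)
Definition CSeries (a : nat -> C) : C :=
  (Series (fun n => Re (a n)), Series (fun n => Im (a n))).

Definition psum (c : nat -> C) (t : R) : C :=
  CSeries (fun n => (RtoC (t ^ n) * c n)%C).

Definition conv_on_nonneg (c : nat -> C) : Prop :=
  forall t : R, 0 <= t -> ex_series (fun n => (RtoC (t ^ n) * c n)%C).

(* L-fractional derivative acting termwise on coefficients:
   LD^alpha sum_n x_n t^n = sum_n x_{n+1} Gamma(n+2)Gamma(2-alpha)/Gamma(n+2-alpha) t^n. *)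
Definition LD (alpha : R) (c : nat -> C) : nat -> C :=
  fun n => (RtoC (Gamma (INR n + 2) * Gamma (2 - alpha) / Gamma (INR n + 2 - alpha))
            * c (S n))%C.

Definition LDk (alpha : R) (k : nat) (c : nat -> C) : nat -> C :=
  Nat.iter k (LD alpha) c.

Definition IsSolution (alpha : R) (m : nat) (a : nat -> C) (c : nat -> C) : Prop :=
  conv_on_nonneg c /\
  forall t : R, 0 <= t ->
    (psum (LDk alpha m c) t
     + fold_right Cplus 0%C
         (map (fun j => a j * psum (LDk alpha j c) t) (seq 0 m)))%C = 0%C.

Definition init_val (alpha : R) (k : nat) (c : nat -> C) : C :=
  psum (LDk alpha k c) 0.

(* On coefficient sequences, [LD alpha] is the weighted shift [c n |-> g n * c (n + 1)] with
   [g n = Gamma (n + 2) Gamma (2 - alpha) / Gamma (n + 2 - alpha) > 0], so [LD^(k o alpha)]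
   sends [c] to [n |-> P_k(n) c (n + k)] with [P_k(n) = g n ... g (n + k - 1)] and the
   [k]-th initial value is [P_k(0) c k].  A solution converges on [0, oo), hence has
   coefficients [O(r ^ n)] for every [r > 0]; since [g n] grows at most geometrically, so
   does the left-hand side, and the one-sided identity theorem turns the equation into the
   vanishing of all its coefficients, i.e. into a recurrence expressing [c (n + m)] through
   [c n, ..., c (n + m - 1)].  Thus a solution is determined by its initial values.
   Conversely, the recurrence started from any initial values produces coefficients that
   are [O(r ^ n)] for every [r > 0], because [g n -> oo] (as [Gamma (n + 2) / Gamma (n + 2 -
   alpha)] grows like [n ^ alpha]) makes each step of the recurrence contract. *)

From Stdlib Require Import Reals Lra Lia List Arith FunctionalExtensionality.
From Coquelicot Require Import Coquelicot.
Open Scope R_scope.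

Lemma exp_le_exp x y : x <= y -> exp x <= exp y.
Proof.
  intros Hxy; destruct (Req_dec x y) as [->|Hne]; [lra|].
  apply Rlt_le, exp_increasing; lra.
Qed.

Lemma exp_pow_INR (x : R) (n : nat) : exp x ^ n = exp (INR n * x).
Proof.
  induction n as [|n IH]; [simpl; rewrite Rmult_0_l, exp_0; ring|].
  rewrite S_INR; simpl; rewrite IH, <- exp_plus; f_equal; ring.
Qed.

Lemma INR_succ_le_pow2 n : INR n + 1 <= 2 ^ n.
Proof.
  induction n as [|n IH]; [simpl; lra|].
  rewrite S_INR; simpl; assert (1 <= 2 ^ n) by (apply pow_R1_Rle; lra); lra.
Qed.

(** * The Gamma function on [[1, oo)] *)

Section ImproperIntegralNonneg.

Variable f : R -> R.
Hypothesis f_ex_RInt : forall a b, 0 < a -> a <= b -> ex_RInt f a b.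
Hypothesis f_nonneg : forall t, 0 < t -> 0 <= f t.

Definition partial_integrals (z : R) : Prop :=
  exists a b, 0 < a /\ a <= b /\ z = RInt f a b.

Lemma RInt_le_RInt_wider a b a' b' :
  0 < a' -> a' <= a -> a <= b -> b <= b' -> RInt f a b <= RInt f a' b'.
Proof.
  intros Ha' Ha'a Hab Hbb'.
  rewrite <- (RInt_Chasles f a' a b'), <- (RInt_Chasles f a b b')
    by (apply f_ex_RInt; lra).
  assert (0 <= RInt f a' a)
    by (apply RInt_ge_0; [lra | apply f_ex_RInt; lra | intros; apply f_nonneg; lra]).
  assert (0 <= RInt f b b')
    by (apply RInt_ge_0; [lra | apply f_ex_RInt; lra | intros; apply f_nonneg; lra]).
  simpl; unfold plus; simpl; lra.
Qed.

Lemma is_RInt_gen_lub L : is_lub partial_integrals L ->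
  is_RInt_gen f (at_right 0) (Rbar_locally p_infty) L.
Proof.
  intros [Hub Hleast] P [eps Heps].
  assert (Happrox : exists a0 b0, 0 < a0 /\ a0 <= b0 /\ L - eps < RInt f a0 b0).
  { apply Classical_Prop.NNPP; intros Hnot.
    enough (L <= L - eps) by (destruct eps; simpl in *; lra).
    apply Hleast; intros z [a [b [Ha [Hab ->]]]].
    apply Rnot_lt_le; intros Hlt; apply Hnot; exists a, b; auto. }
  destruct Happrox as [a0 [b0 [Ha0 [Hab0 Hlt]]]].
  exists (fun a => 0 < a < a0) (fun b => b0 < b).
  - exists (mkposreal a0 Ha0); intros a Ha Hpos; split; [exact Hpos|].
    apply Rabs_def2 in Ha; simpl in Ha; unfold minus, plus, opp in Ha; simpl in Ha; lra.
  - exists b0; auto.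
  - intros a b [Ha Haa0] Hb; exists (RInt f a b); simpl; split.
    + apply (RInt_correct (V := R_CompleteNormedModule)), f_ex_RInt; lra.
    + apply Heps.
      assert (RInt f a0 b0 <= RInt f a b) by (apply RInt_le_RInt_wider; lra).
      assert (RInt f a b <= L) by (apply Hub; exists a, b; repeat split; lra).
      unfold ball; simpl; unfold AbsRing_ball, abs, minus, plus, opp; simpl.
      apply Rabs_def1; lra.
Qed.

End ImproperIntegralNonneg.

Definition gamma_integrand (y t : R) : R := Rpower t y * exp (- t).

Lemma gamma_integrand_pos y t : 0 < gamma_integrand y t.
Proof. apply Rmult_lt_0_compat; apply exp_pos. Qed.

Lemma ex_RInt_gamma_integrand y a b : 0 < a -> a <= b -> ex_RInt (gamma_integrand y) a b.
Proof.
  intros Ha Hab; apply (@ex_RInt_continuous R_CompleteNormedModule); intros t Ht.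
  rewrite Rmin_left in Ht by lra; rewrite Rmax_right in Ht by lra.
  apply (@ex_derive_continuous R_AbsRing R_NormedModule).
  unfold gamma_integrand, Rpower; auto_derive; lra.
Qed.

Lemma RInt_exp_neg_half_le a b :
  0 <= a -> a <= b -> ex_RInt (fun t => exp (- (t / 2))) a b /\
  RInt (fun t => exp (- (t / 2))) a b <= 2.
Proof.
  intros Ha Hab.
  assert (Hint : is_RInt (fun t => exp (- (t / 2))) a b
                   (minus (- 2 * exp (- (b / 2))) (- 2 * exp (- (a / 2))))).
  { apply (is_RInt_derive (fun t => - 2 * exp (- (t / 2)))).
    - intros t _; auto_derive; [easy|].
      change (t * / 2) with (t / 2); generalize (exp (- (t / 2))); intros; field.
    - intros t _; apply (@ex_derive_continuous R_AbsRing R_NormedModule); auto_derive; easy. }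
  split; [eexists; exact Hint|].
  rewrite (is_RInt_unique _ _ _ _ Hint); unfold minus, plus, opp; simpl.
  pose proof (exp_pos (- (b / 2))).
  assert (exp (- (a / 2)) <= 1) by (rewrite <- exp_0; apply exp_le_exp; lra).
  lra.
Qed.

(* For [y > 0] the bound follows from [1 + ln u <= u] at [u = t / (2 y)]. *)
Lemma Rpower_le_exp_half y t : 0 < y -> 0 < t ->
  Rpower t y <= exp (y * ln (2 * y) - y) * exp (t / 2).
Proof.
  intros Hy Ht; unfold Rpower; rewrite <- exp_plus; apply exp_le_exp.
  assert (Hu := exp_ineq1_le (ln (t / (2 * y)))).
  rewrite exp_ln, ln_div in Hu by (try apply Rdiv_lt_0_compat; lra).
  assert (Hy' : y * (1 + (ln t - ln (2 * y))) <= y * (t / (2 * y)))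
    by (apply Rmult_le_compat_l; lra).
  replace (y * (t / (2 * y))) with (t / 2) in Hy' by (field; lra).
  lra.
Qed.

Lemma Rpower_le_exp_half_bound y : 0 <= y ->
  exists M, 0 <= M /\ forall t, 0 < t -> Rpower t y <= M * exp (t / 2).
Proof.
  intros Hy; destruct (Req_dec y 0) as [->|Hy0].
  - exists 1; split; [lra|]; intros t Ht.
    rewrite Rpower_O, Rmult_1_l by lra; rewrite <- exp_0; apply exp_le_exp; lra.
  - exists (exp (y * ln (2 * y) - y)); split; [apply Rlt_le, exp_pos|].
    intros t Ht; apply Rpower_le_exp_half; lra.
Qed.

Lemma RInt_gamma_integrand_bounded x : 1 <= x ->
  exists K, forall a b, 0 < a -> a <= b -> RInt (gamma_integrand (x - 1)) a b <= K.
Proof.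
  intros Hx; destruct (Rpower_le_exp_half_bound (x - 1)) as [M [HM HMt]]; [lra|].
  exists (M * 2); intros a b Ha Hab.
  destruct (RInt_exp_neg_half_le a b) as [Hex Hle]; try lra.
  apply Rle_trans with (RInt (fun t => scal M (exp (- (t / 2)))) a b).
  - apply RInt_le; [lra | apply ex_RInt_gamma_integrand; lra
                   | apply (@ex_RInt_scal R_NormedModule), Hex |].
    intros t Ht; unfold gamma_integrand, scal; simpl; unfold mult; simpl.
    replace (exp (- (t / 2))) with (exp (t / 2) * exp (- t))
      by (rewrite <- exp_plus; f_equal; lra).
    specialize (HMt t ltac:(lra)); pose proof (exp_pos (- t)); nra.
  - rewrite (@RInt_scal R_CompleteNormedModule) by exact Hex.
    apply Rmult_le_compat_l; assumption.
Qed.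

Lemma Gamma_is_lub x : 1 <= x ->
  is_lub (partial_integrals (gamma_integrand (x - 1))) (Gamma x).
Proof.
  intros Hx; destruct (RInt_gamma_integrand_bounded x Hx) as [K HK].
  destruct (completeness (partial_integrals (gamma_integrand (x - 1)))) as [L HL].
  - exists K; intros z [a [b [Ha [Hab ->]]]]; apply HK; assumption.
  - exists (RInt (gamma_integrand (x - 1)) 1 1), 1, 1; repeat split; lra.
  - replace (Gamma x) with L; [exact HL|].
    symmetry; apply is_RInt_gen_unique, is_RInt_gen_lub; [| |exact HL].
    + apply ex_RInt_gamma_integrand.
    + intros t _; apply Rlt_le, gamma_integrand_pos.
Qed.

Lemma RInt_le_Gamma x a b : 1 <= x -> 0 < a -> a <= b ->
  RInt (gamma_integrand (x - 1)) a b <= Gamma x.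
Proof.
  intros Hx Ha Hab; apply (Gamma_is_lub x Hx); exists a, b; auto.
Qed.

Lemma Gamma_le_of_RInt_le x K : 1 <= x ->
  (forall a b, 0 < a -> a <= b -> RInt (gamma_integrand (x - 1)) a b <= K) ->
  Gamma x <= K.
Proof.
  intros Hx HK; apply (Gamma_is_lub x Hx); intros z [a [b [Ha [Hab ->]]]]; auto.
Qed.

Lemma Gamma_le_of_integrand_le x y A B : 1 <= x -> 1 <= y -> 0 <= A -> 0 <= B ->
  (forall t, 0 < t ->
     gamma_integrand (x - 1) t <= A * exp (- (t / 2)) + B * gamma_integrand (y - 1) t) ->
  Gamma x <= 2 * A + B * Gamma y.
Proof.
  intros Hx Hy HA HB Hle; apply Gamma_le_of_RInt_le; [exact Hx|]; intros a b Ha Hab.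
  destruct (RInt_exp_neg_half_le a b) as [Hex Hexp]; try lra.
  assert (Hexy := ex_RInt_gamma_integrand (y - 1) a b Ha Hab).
  set (g t := plus (scal A (exp (- (t / 2)))) (scal B (gamma_integrand (y - 1) t))).
  assert (Hg : ex_RInt g a b)
    by (apply (@ex_RInt_plus R_NormedModule); apply (@ex_RInt_scal R_NormedModule); assumption).
  apply Rle_trans with (RInt g a b).
  - apply RInt_le; [exact Hab | apply ex_RInt_gamma_integrand; assumption | exact Hg |].
    intros t Ht; apply Hle; lra.
  - assert (Hsplit : RInt g a b = A * RInt (fun t => exp (- (t / 2))) a b
                                 + B * RInt (gamma_integrand (y - 1)) a b).
    { unfold g; rewrite (RInt_plus (V := R_CompleteNormedModule)).
      - rewrite (RInt_scal (V := R_CompleteNormedModule)) by exact Hex.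
        rewrite (RInt_scal (V := R_CompleteNormedModule)) by exact Hexy.
        reflexivity.
      - apply (@ex_RInt_scal R_NormedModule); exact Hex.
      - apply (@ex_RInt_scal R_NormedModule); exact Hexy. }
    rewrite Hsplit.
    assert (RInt (gamma_integrand (y - 1)) a b <= Gamma y) by (apply RInt_le_Gamma; assumption).
    apply Rplus_le_compat; [rewrite (Rmult_comm 2 A)|]; apply Rmult_le_compat_l; assumption.
Qed.

Lemma Gamma_ge_of_integrand_ge x a b c : 1 <= x -> 0 < a -> a <= b ->
  (forall t, a <= t <= b -> c <= gamma_integrand (x - 1) t) -> c * (b - a) <= Gamma x.
Proof.
  intros Hx Ha Hab Hc; apply Rle_trans with (RInt (gamma_integrand (x - 1)) a b).
  - replace (c * (b - a)) with (RInt (fun _ => c) a b)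
      by (rewrite (@RInt_const R_CompleteNormedModule);
          unfold scal; simpl; unfold mult; simpl; ring).
    apply RInt_le; [exact Hab | apply ex_RInt_const | apply ex_RInt_gamma_integrand; assumption |].
    intros t Ht; apply Hc; lra.
  - apply RInt_le_Gamma; assumption.
Qed.

Lemma Gamma_ge_pow x k : INR k + 1 <= x -> (INR k + 1) ^ k * exp (- (INR k + 2)) <= Gamma x.
Proof.
  intros Hx; assert (Hk := pos_INR k).
  replace ((INR k + 1) ^ k * exp (- (INR k + 2)))
    with ((INR k + 1) ^ k * exp (- (INR k + 2)) * ((INR k + 2) - (INR k + 1))) by ring.
  apply Gamma_ge_of_integrand_ge; try lra; intros t Ht; unfold gamma_integrand.
  apply Rmult_le_compat; [apply pow_le; lra | apply Rlt_le, exp_pos | | apply exp_le_exp; lra].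
  apply Rle_trans with (t ^ k); [apply pow_incr; lra|].
  rewrite <- Rpower_pow by lra; apply Rle_Rpower; lra.
Qed.

Lemma Gamma_pos x : 1 <= x -> 0 < Gamma x.
Proof.
  intros Hx; apply Rlt_le_trans with (2 := Gamma_ge_pow x 0 ltac:(simpl; lra)).
  simpl; rewrite Rmult_1_l; apply exp_pos.
Qed.

(* [Gamma (n + 2) >= ((n + 2) / e) ^ (n + 1) / e ^ 2] beats every geometric sequence. *)
Lemma Gamma_dominates_geometric C T : 0 <= T ->
  exists N, forall n, (N <= n)%nat -> C * T ^ S n <= Gamma (INR n + 2).
Proof.
  intros HT; set (E := exp 1); assert (HE : 0 < E) by apply exp_pos.
  destruct (INR_unbounded (Rmax (2 * E * T) (C * E ^ 2))) as [N HN].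
  assert (HN1 := Rmax_l (2 * E * T) (C * E ^ 2)); assert (HN2 := Rmax_r (2 * E * T) (C * E ^ 2)).
  exists N; intros n Hn; assert (HNn : INR N <= INR n) by (apply le_INR; exact Hn).
  assert (Hn0 := pos_INR n).
  assert (Hlow := Gamma_ge_pow (INR n + 2) (S n) ltac:(rewrite S_INR; lra)).
  rewrite S_INR in Hlow.
  replace (exp (- (INR n + 1 + 2))) with (/ E ^ 2 * (/ E) ^ S n) in Hlow.
  2: { unfold E; rewrite exp_pow_INR, <- !exp_Ropp, exp_pow_INR, <- exp_plus.
       f_equal; rewrite (S_INR n), (S_INR 1), INR_1; ring. }
  rewrite <- Rmult_assoc, (Rmult_comm _ (/ E ^ 2)), Rmult_assoc, <- Rpow_mult_distr in Hlow.
  assert (HEn : 2 * T <= (INR n + 1 + 1) * / E).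
  { apply (Rmult_le_reg_r E); [exact HE|].
    rewrite (Rmult_assoc (INR n + 1 + 1)), Rinv_l by lra; lra. }
  assert (H2T : (2 * T) ^ S n <= ((INR n + 1 + 1) * / E) ^ S n) by (apply pow_incr; lra).
  rewrite Rpow_mult_distr in H2T.
  assert (H2 := INR_succ_le_pow2 (S n)); rewrite S_INR in H2.
  assert (HTn : 0 <= T ^ S n) by (apply pow_le; exact HT).
  assert (HE2 : 0 < E ^ 2) by (apply pow_lt; exact HE).
  assert (HC : C <= (INR n + 1 + 1) * / E ^ 2).
  { apply (Rmult_le_reg_r (E ^ 2)); [exact HE2|].
    rewrite (Rmult_assoc (INR n + 1 + 1)), Rinv_l by lra; lra. }
  apply Rle_trans with ((INR n + 1 + 1) * / E ^ 2 * T ^ S n);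
    [apply Rmult_le_compat_r; assumption|].
  apply Rle_trans with (2 := Hlow).
  rewrite (Rmult_comm _ (/ E ^ 2)), Rmult_assoc.
  apply Rmult_le_compat_l; [apply Rlt_le, Rinv_0_lt_compat; exact HE2|].
  apply Rle_trans with (2 ^ S n * T ^ S n); [apply Rmult_le_compat_r|]; assumption.
Qed.

(** * Growth of the coefficients of the L-fractional derivative *)

Lemma Gamma_succ_le y : 0 < y -> Gamma (y + 1) <= 2 * exp (y * ln (2 * y) - y).
Proof.
  intros Hy; replace (2 * exp (y * ln (2 * y) - y))
    with (2 * exp (y * ln (2 * y) - y) + 0 * Gamma (y + 1)) by ring.
  apply Gamma_le_of_integrand_le; try lra; [apply Rlt_le, exp_pos|]; intros t Ht.
  unfold gamma_integrand; replace (y + 1 - 1) with y by ring.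
  replace (exp (- (t / 2))) with (exp (t / 2) * exp (- t)) by (rewrite <- exp_plus; f_equal; lra).
  rewrite Rmult_0_l, Rplus_0_r, <- Rmult_assoc.
  apply Rmult_le_compat_r; [apply Rlt_le, exp_pos | apply Rpower_le_exp_half; assumption].
Qed.

(* Split the integral at [T]: below [T] the integrand is at most [T ^ (x - 1) e^(-t)],
   above [T] the factor [t ^ (- beta)] is at most [T ^ (- beta)]. *)
Lemma Gamma_sub_le x beta T : 0 < beta -> 1 <= x - beta -> 1 <= T ->
  Gamma (x - beta) <= 2 * Rpower T (x - 1) + Rpower T (- beta) * Gamma x.
Proof.
  intros Hbeta Hx HT; apply Gamma_le_of_integrand_le; try lra;
    [apply Rlt_le, exp_pos | apply Rlt_le, exp_pos |].
  intros t Ht; unfold gamma_integrand.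
  replace (x - beta - 1) with ((x - 1) + - beta) by ring; rewrite Rpower_plus.
  assert (0 < Rpower t (x - 1)) by apply exp_pos; assert (0 < Rpower t (- beta)) by apply exp_pos.
  assert (0 < Rpower T (x - 1)) by apply exp_pos; assert (0 < Rpower T (- beta)) by apply exp_pos.
  pose proof (exp_pos (- t)); pose proof (exp_pos (- (t / 2))).
  destruct (Rle_dec t T) as [HtT|HtT].
  - assert (Rpower t (x - 1) * Rpower t (- beta) <= Rpower T (x - 1)).
    { rewrite <- Rpower_plus; apply Rle_trans with (Rpower T (x - 1 + - beta)).
      + apply Rle_Rpower_l; lra.
      + apply Rle_Rpower; lra. }
    assert (exp (- t) <= exp (- (t / 2))) by (apply exp_le_exp; lra).
    assert (0 <= Rpower T (- beta) * (Rpower t (x - 1) * exp (- t))) by (apply Rmult_le_pos; nra).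
    enough (Rpower t (x - 1) * Rpower t (- beta) * exp (- t) <= Rpower T (x - 1) * exp (- (t / 2)))
      by lra.
    apply Rmult_le_compat; [nra | lra | assumption | assumption].
  - assert (Rpower t (- beta) <= Rpower T (- beta)).
    { rewrite !Rpower_Ropp; apply Rinv_le_contravar; [apply exp_pos|].
      apply Rle_Rpower_l; lra. }
    assert (0 <= Rpower T (x - 1) * exp (- (t / 2))) by (apply Rmult_le_pos; lra).
    enough (Rpower t (- beta) * (Rpower t (x - 1) * exp (- t))
              <= Rpower T (- beta) * (Rpower t (x - 1) * exp (- t))) by lra.
    apply Rmult_le_compat_r; [nra | assumption].
Qed.

Definition LD_factor (alpha : R) (n : nat) : R :=
  Gamma (INR n + 2) * Gamma (2 - alpha) / Gamma (INR n + 2 - alpha).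

Section LDFactor.

Variable alpha : R.
Hypothesis Halpha : 0 < alpha < 1.

Lemma LD_factor_pos n : 0 < LD_factor alpha n.
Proof.
  assert (Hn := pos_INR n); unfold LD_factor.
  apply Rdiv_lt_0_compat; [apply Rmult_lt_0_compat|]; apply Gamma_pos; lra.
Qed.

(* [Gamma (n + 2) <= 2 (2 (n + 1)) ^ (n + 1) e ^ (- n - 1)] against
   [Gamma (n + 2 - alpha) >= (n + 1) ^ n e ^ (- n - 2)]. *)
Lemma LD_factor_le_geometric : exists A B, 0 < B /\ forall n, LD_factor alpha n <= A * B ^ n.
Proof.
  set (G2 := Gamma (2 - alpha)); assert (HG2 : 0 < G2) by (apply Gamma_pos; lra).
  exists (2 * G2 * exp (ln 2 + 1)), (exp (ln 2 + 1)); split; [apply exp_pos|]; intros n.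
  set (s := INR n); assert (Hs : 0 <= s) by apply pos_INR.
  set (U := (s + 1) * ln (2 * (s + 1)) - (s + 1)); set (V := s * ln (s + 1) - (s + 2)).
  assert (Hup : Gamma (s + 2) <= 2 * exp U)
    by (replace (s + 2) with (s + 1 + 1) by ring; apply Gamma_succ_le; lra).
  assert (Hlow : exp V <= Gamma (s + 2 - alpha)).
  { apply Rle_trans with (2 := Gamma_ge_pow (s + 2 - alpha) n ltac:(unfold s; lra)).
    fold s; rewrite <- Rpower_pow by lra; unfold Rpower, V, Rminus; rewrite exp_plus.
    right; reflexivity. }
  assert (Hln : ln (s + 1) <= s).
  { pose proof (exp_ineq1_le (ln (s + 1))); rewrite exp_ln in H by lra; lra. }
  unfold LD_factor; fold G2 s.
  apply Rle_trans with (2 * exp U * G2 / exp V).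
  { apply Rmult_le_compat; [| |apply Rmult_le_compat_r|apply Rinv_le_contravar];
      try solve [apply Rlt_le, Rinv_0_lt_compat; apply Gamma_pos; lra]; try lra;
      try (apply Rmult_le_pos; apply Rlt_le, Gamma_pos; lra); apply exp_pos. }
  rewrite exp_pow_INR; fold s; unfold Rdiv; rewrite <- exp_Ropp.
  replace (2 * exp U * G2 * exp (- V)) with (2 * G2 * exp (U - V))
    by (unfold Rminus; rewrite exp_plus; ring).
  rewrite (Rmult_assoc (2 * G2) (exp (ln 2 + 1))), <- exp_plus.
  apply Rmult_le_compat_l; [lra|]; apply exp_le_exp.
  unfold U, V; rewrite ln_mult by lra; lra.
Qed.

(* With [T ^ alpha = M], [Gamma_sub_le] gives [Gamma (n + 2 - alpha) <= 2 Gamma (n + 2) / M]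
   as soon as [Gamma (n + 2)] dominates [2 M T ^ (n + 1)];
   then [LD_factor >= M Gamma (2 - alpha) / 2]. *)
Lemma LD_factor_unbounded L : exists N, forall n, (N <= n)%nat -> L <= LD_factor alpha n.
Proof.
  set (G2 := Gamma (2 - alpha)); assert (HG2 : 0 < G2) by (apply Gamma_pos; lra).
  set (M := Rmax 1 (2 * L / G2)).
  assert (HM1 : 1 <= M) by apply Rmax_l; assert (HM2 : 2 * L / G2 <= M) by apply Rmax_r.
  set (T := Rpower M (/ alpha)).
  assert (HT : 1 <= T).
  { unfold T; rewrite <- (Rpower_O M) by lra; apply Rle_Rpower; [lra|].
    apply Rlt_le, Rinv_0_lt_compat; lra. }
  assert (HTalpha : Rpower T (- alpha) = / M).
  { unfold T; rewrite Rpower_mult; replace (/ alpha * - alpha) with (- (1)) by (field; lra).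
    rewrite Rpower_Ropp, Rpower_1; lra. }
  destruct (Gamma_dominates_geometric (2 * M) T) as [N HN]; [lra|].
  exists N; intros n Hn; specialize (HN n Hn).
  set (s := INR n); fold s in HN; assert (Hs : 0 <= s) by apply pos_INR.
  assert (Hup := Gamma_sub_le (s + 2) alpha T ltac:(lra) ltac:(lra) HT).
  rewrite HTalpha in Hup.
  replace (s + 2 - 1) with (INR (S n)) in Hup by (unfold s; rewrite S_INR; ring).
  rewrite Rpower_pow in Hup by lra.
  assert (HGn : 0 < Gamma (s + 2)) by (apply Gamma_pos; lra).
  assert (HGa : 0 < Gamma (s + 2 - alpha)) by (apply Gamma_pos; lra).
  assert (Hratio : Gamma (s + 2 - alpha) * M <= 2 * Gamma (s + 2)).
  { apply Rle_trans with ((2 * T ^ S n + / M * Gamma (s + 2)) * M);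
      [apply Rmult_le_compat_r; lra|].
    replace ((2 * T ^ S n + / M * Gamma (s + 2)) * M) with (2 * M * T ^ S n + Gamma (s + 2))
      by (field; lra).
    lra. }
  assert (HL : 2 * L <= G2 * M).
  { assert (H : 2 * L / G2 * G2 <= M * G2) by (apply Rmult_le_compat_r; lra).
    replace (2 * L / G2 * G2) with (2 * L) in H by (field; lra); lra. }
  unfold LD_factor; fold G2 s.
  apply (Rmult_le_reg_r (2 * Gamma (s + 2 - alpha))); [lra|].
  replace (Gamma (s + 2) * G2 / Gamma (s + 2 - alpha) * (2 * Gamma (s + 2 - alpha)))
    with (G2 * (2 * Gamma (s + 2))) by (field; lra).
  apply Rle_trans with (G2 * M * Gamma (s + 2 - alpha)); [nra|].
  replace (G2 * M * Gamma (s + 2 - alpha)) with (G2 * (Gamma (s + 2 - alpha) * M)) by ring.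
  apply Rmult_le_compat_l; lra.
Qed.

End LDFactor.

(** * Entire coefficient sequences *)

Lemma upper_bound_on_prefix (u : nat -> R) N : exists K, forall n, (n < N)%nat -> u n <= K.
Proof.
  induction N as [|N [K HK]]; [exists 0; intros; lia|].
  exists (Rmax K (u N)); intros n Hn; destruct (Nat.eq_dec n N) as [->|HnN]; [apply Rmax_r|].
  apply Rle_trans with K; [apply HK; lia | apply Rmax_l].
Qed.

Lemma bounded_of_eventually_bounded (u : nat -> R) N B :
  (forall n, (N <= n)%nat -> u n <= B) -> exists K, forall n, u n <= K.
Proof.
  intros HB; destruct (upper_bound_on_prefix u N) as [K HK].
  exists (Rmax K B); intros n; destruct (le_lt_dec N n) as [HNn|HnN].
  - apply Rle_trans with B; [apply HB, HNn | apply Rmax_r].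
  - apply Rle_trans with K; [apply HK, HnN | apply Rmax_l].
Qed.

Definition entire (c : nat -> C) : Prop :=
  forall r, 0 < r -> exists K, forall n, Cmod (c n) <= K * r ^ n.

Lemma im_le_Cmod (z : C) : Rabs (Im z) <= Cmod z.
Proof.
  destruct z as [x y]; unfold Cmod, Im; simpl; rewrite <- sqrt_Rsqr_abs.
  apply sqrt_le_1_alt; unfold Rsqr; pose proof (pow2_ge_0 x); nra.
Qed.

Lemma CV_radius_infinite (a : nat -> R) :
  (forall r, 0 < r -> exists K, forall n, Rabs (a n) <= K * r ^ n) -> CV_radius a = p_infty.
Proof.
  intros Ha.
  assert (Hle : forall x, 0 < x -> Rbar_le x (CV_radius a)).
  { intros x Hx; apply (proj1 (CV_radius_bounded a)).
    destruct (Ha (/ x) ltac:(apply Rinv_0_lt_compat; exact Hx)) as [K HK].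
    exists K; intros n; rewrite Rabs_mult, (Rabs_pos_eq (x ^ n)) by (apply pow_le; lra).
    apply Rle_trans with (K * / x ^ n * x ^ n);
      [apply Rmult_le_compat_r; [apply pow_le; lra | rewrite <- pow_inv; apply HK]|].
    right; field; apply pow_nonzero; lra. }
  pose proof (CV_radius_ge_0 a) as H0.
  destruct (CV_radius a) as [y| |]; [|reflexivity|contradiction].
  specialize (Hle (Rmax 1 (y + 1)) ltac:(pose proof (Rmax_l 1 (y + 1)); lra)).
  simpl in Hle; pose proof (Rmax_r 1 (y + 1)); lra.
Qed.

Lemma entire_CV_radius_Re c : entire c -> CV_radius (fun n => Re (c n)) = p_infty.
Proof.
  intros Hc; apply CV_radius_infinite; intros r Hr; destruct (Hc r Hr) as [K HK].
  exists K; intros n; eapply Rle_trans; [apply re_le_Cmod | apply HK].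
Qed.

Lemma entire_CV_radius_Im c : entire c -> CV_radius (fun n => Im (c n)) = p_infty.
Proof.
  intros Hc; apply CV_radius_infinite; intros r Hr; destruct (Hc r Hr) as [K HK].
  exists K; intros n; eapply Rle_trans; [apply im_le_Cmod | apply HK].
Qed.

Lemma entire_ex_pseries_Re c t : entire c -> ex_pseries (fun n => Re (c n)) t.
Proof. intros Hc; apply CV_radius_inside; rewrite entire_CV_radius_Re by exact Hc; easy. Qed.

Lemma entire_ex_pseries_Im c t : entire c -> ex_pseries (fun n => Im (c n)) t.
Proof. intros Hc; apply CV_radius_inside; rewrite entire_CV_radius_Im by exact Hc; easy. Qed.

Lemma entire_plus c d : entire c -> entire d -> entire (fun n => (c n + d n)%C).
Proof.
  intros Hc Hd r Hr; destruct (Hc r Hr) as [K1 H1], (Hd r Hr) as [K2 H2].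
  exists (K1 + K2); intros n; eapply Rle_trans; [apply Cmod_triangle|].
  specialize (H1 n); specialize (H2 n); lra.
Qed.

Lemma entire_scal (l : C) c : entire c -> entire (fun n => (l * c n)%C).
Proof.
  intros Hc r Hr; destruct (Hc r Hr) as [K HK]; exists (Cmod l * K); intros n.
  rewrite Cmod_mult, Rmult_assoc; apply Rmult_le_compat_l; [apply Cmod_ge_0 | apply HK].
Qed.

Lemma entire_zero : entire (fun _ => 0%C).
Proof. intros r Hr; exists 0; intros n; rewrite Cmod_0; lra. Qed.

Lemma conv_on_nonneg_entire c : conv_on_nonneg c -> entire c.
Proof.
  intros Hc r Hr.
  assert (Hrn : forall n, 0 < r ^ n) by (intros; apply pow_lt, Hr).
  destruct (Cauchy_ex_series _ (Hc (/ r) ltac:(apply Rlt_le, Rinv_0_lt_compat, Hr))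
              (mkposreal 1 Rlt_0_1)) as [N HN].
  destruct (bounded_of_eventually_bounded (fun n => Cmod (c n) / r ^ n) N 1) as [K HK].
  - intros n Hn; specialize (HN n n Hn Hn); rewrite sum_n_n in HN.
    change (Cmod (RtoC ((/ r) ^ n) * c n) < 1) in HN.
    rewrite Cmod_mult, Cmod_R, Rabs_pos_eq, pow_inv in HN
      by (apply pow_le, Rlt_le, Rinv_0_lt_compat, Hr).
    unfold Rdiv; rewrite Rmult_comm; lra.
  - exists K; intros n; specialize (HK n); simpl in HK.
    apply (Rmult_le_reg_r (/ r ^ n)); [apply Rinv_0_lt_compat, Hrn|].
    rewrite Rmult_assoc, Rinv_r, Rmult_1_r by (apply Rgt_not_eq, Hrn); exact HK.
Qed.

Lemma entire_conv_on_nonneg c : entire c -> conv_on_nonneg c.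
Proof.
  intros Hc t Ht.
  destruct (Hc (/ (2 * (t + 1))) ltac:(apply Rinv_0_lt_compat; lra)) as [K HK].
  assert (HK0 : 0 <= K)
    by (specialize (HK 0%nat); pose proof (Cmod_ge_0 (c 0%nat)); simpl in HK; lra).
  apply (@ex_series_le C_AbsRing C_CompleteNormedModule) with (b := fun n => scal K ((1 / 2) ^ n)).
  - intros n; change (Cmod (RtoC (t ^ n) * c n) <= K * (1 / 2) ^ n).
    rewrite Cmod_mult, Cmod_R, Rabs_pos_eq by (apply pow_le, Ht).
    apply Rle_trans with (t ^ n * (K * (/ (2 * (t + 1))) ^ n));
      [apply Rmult_le_compat_l; [apply pow_le, Ht | apply HK]|].
    rewrite Rmult_comm, Rmult_assoc, <- Rpow_mult_distr; apply Rmult_le_compat_l; [exact HK0|].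
    apply pow_incr; split; [apply Rmult_le_pos; [apply Rlt_le, Rinv_0_lt_compat; lra | exact Ht]|].
    apply (Rmult_le_reg_l (2 * (t + 1))); [lra|].
    rewrite <- Rmult_assoc, Rinv_r by lra; lra.
  - apply (@ex_series_scal_l R_AbsRing R_NormedModule), ex_series_geom.
    rewrite Rabs_pos_eq; lra.
Qed.

Lemma psum_PSeries c t :
  psum c t = (PSeries (fun n => Re (c n)) t, PSeries (fun n => Im (c n)) t).
Proof.
  unfold psum, CSeries, PSeries; f_equal; apply Series_ext; intros n;
    destruct (c n); unfold Re, Im; simpl; ring.
Qed.

Lemma psum_plus c d t : entire c -> entire d ->
  psum (fun n => (c n + d n)%C) t = (psum c t + psum d t)%C.
Proof.
  intros Hc Hd; rewrite !psum_PSeries; unfold Cplus; simpl; f_equal.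
  - rewrite <- PSeries_plus by (apply entire_ex_pseries_Re; assumption); reflexivity.
  - rewrite <- PSeries_plus by (apply entire_ex_pseries_Im; assumption); reflexivity.
Qed.

Lemma psum_scal (l : C) c t : entire c -> psum (fun n => (l * c n)%C) t = (l * psum c t)%C.
Proof.
  intros Hc; rewrite !psum_PSeries; destruct l as [lr li]; unfold Cmult; simpl.
  assert (Hex : forall (u : nat -> R) x, ex_pseries u t -> ex_pseries (PS_scal x u) t)
    by (intros u x Hu; apply ex_pseries_scal; [apply Rmult_comm | exact Hu]).
  set (u := fun n => Re (c n)); set (v := fun n => Im (c n)).
  assert (Hu : ex_pseries u t) by apply entire_ex_pseries_Re, Hc.
  assert (Hv : ex_pseries v t) by apply entire_ex_pseries_Im, Hc.
  f_equal.
  - transitivity (PSeries (PS_minus (PS_scal lr u) (PS_scal li v)) t).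
    + apply PSeries_ext; intros n.
      unfold PS_minus, PS_scal, u, v, plus, opp, scal; simpl; unfold mult; simpl.
      destruct (c n); simpl; ring.
    + rewrite PSeries_minus, !PSeries_scal by auto; reflexivity.
  - transitivity (PSeries (PS_plus (PS_scal lr v) (PS_scal li u)) t).
    + apply PSeries_ext; intros n.
      unfold PS_plus, PS_scal, u, v, plus, scal; simpl; unfold mult; simpl.
      destruct (c n); simpl; ring.
    + rewrite PSeries_plus, !PSeries_scal by auto; reflexivity.
Qed.

Lemma psum_zero t : psum (fun _ => 0%C) t = 0%C.
Proof. rewrite psum_PSeries; simpl; rewrite PSeries_const_0; reflexivity. Qed.

Lemma psum_at_0 c : psum c 0 = c 0%nat.
Proof. rewrite psum_PSeries, !PSeries_0; destruct (c 0%nat); reflexivity. Qed.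

Lemma continuity_pt_eq0_of_right (f : R -> R) rho : 0 < rho ->
  continuity_pt f 0 -> (forall t, 0 < t < rho -> f t = 0) -> f 0 = 0.
Proof.
  intros Hrho Hf H0; apply Rabs_eq_0, Rle_antisym; [|apply Rabs_pos]; apply Rnot_lt_le; intros Hpos.
  destruct (Hf (Rabs (f 0)) Hpos) as [delta [Hdelta Hclose]].
  set (t := Rmin delta rho / 2); assert (Ht : 0 < t < Rmin delta rho).
  { assert (0 < Rmin delta rho) by (apply Rmin_pos; lra); unfold t; lra. }
  assert (Hmin := Rmin_l delta rho); assert (Hmin' := Rmin_r delta rho).
  specialize (Hclose t); simpl in Hclose; unfold R_dist in Hclose.
  rewrite H0, Rminus_0_l, Rabs_Ropp in Hclose by lra; apply (Rlt_irrefl (Rabs (f 0))), Hclose.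
  split; [split; [exact I | lra] | rewrite Rminus_0_r, Rabs_pos_eq; lra].
Qed.

Section OneSidedIdentity.

Variables (b : nat -> R) (rho : R).
Hypothesis Hrho : 0 < rho.
Hypothesis Hrad : Rbar_le rho (CV_radius b).
Hypothesis Hb : forall t, 0 < t < rho -> PSeries b t = 0.

Lemma Rbar_lt_CV_radius_of_lt t : 0 <= t < rho -> Rbar_lt (Rabs t) (CV_radius b).
Proof.
  intros Ht; rewrite Rabs_pos_eq by lra; eapply Rbar_lt_le_trans; [|exact Hrad]; simpl; lra.
Qed.

Lemma PSeries_coef0_eq0_of_right : b 0%nat = 0.
Proof.
  rewrite <- PSeries_0; apply (continuity_pt_eq0_of_right _ rho Hrho); [|exact Hb].
  apply PSeries_continuity, Rbar_lt_CV_radius_of_lt; lra.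
Qed.

Lemma PSeries_decr_1_eq0_of_right t : 0 < t < rho -> PSeries (PS_decr_1 b) t = 0.
Proof.
  intros Ht; assert (H := Hb t Ht).
  rewrite PSeries_decr_1, PSeries_coef0_eq0_of_right, Rplus_0_l in H
    by (apply CV_radius_inside, Rbar_lt_CV_radius_of_lt; lra).
  apply Rmult_integral in H; destruct H as [Ht0|]; [lra | assumption].
Qed.

End OneSidedIdentity.

(* One-sided variant of [PSeries_ext_recip]. *)
Lemma PSeries_coef_eq0_of_right (b : nat -> R) rho : 0 < rho -> Rbar_le rho (CV_radius b) ->
  (forall t, 0 < t < rho -> PSeries b t = 0) -> forall n, b n = 0.
Proof.
  intros Hrho Hrad Hb n; revert b Hrad Hb; induction n as [|n IH]; intros b Hrad Hb.
  - apply (PSeries_coef0_eq0_of_right b rho); assumption.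
  - apply (IH (PS_decr_1 b)); [rewrite CV_radius_decr_1; exact Hrad|].
    apply PSeries_decr_1_eq0_of_right; assumption.
Qed.

Lemma psum_coef_eq0 c : entire c -> (forall t, 0 <= t -> psum c t = 0%C) -> forall n, c n = 0%C.
Proof.
  intros Hc Hpsum n.
  assert (Hpart : forall u : nat -> R, CV_radius u = p_infty ->
                    (forall t, 0 < t -> PSeries u t = 0) -> u n = 0).
  { intros u Hu Hzero; apply (PSeries_coef_eq0_of_right u 1); [lra | rewrite Hu; easy |].
    intros t Ht; apply Hzero; lra. }
  assert (Hre : Re (c n) = 0).
  { apply (Hpart (fun n => Re (c n))); [apply entire_CV_radius_Re, Hc|].
    intros t Ht; specialize (Hpsum t ltac:(lra)); rewrite psum_PSeries in Hpsum.
    injection Hpsum; auto. }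
  assert (Him : Im (c n) = 0).
  { apply (Hpart (fun n => Im (c n))); [apply entire_CV_radius_Im, Hc|].
    intros t Ht; specialize (Hpsum t ltac:(lra)); rewrite psum_PSeries in Hpsum.
    injection Hpsum; auto. }
  destruct (c n) as [x y]; unfold Re, Im in *; simpl in *; subst; reflexivity.
Qed.

(** * The equation on coefficients *)

Fixpoint LD_weight (alpha : R) (k n : nat) : R :=
  match k with
  | O => 1
  | S k' => LD_factor alpha n * LD_weight alpha k' (S n)
  end.

Lemma LDk_coef alpha k c n : LDk alpha k c n = (RtoC (LD_weight alpha k n) * c (n + k)%nat)%C.
Proof.
  revert c n; induction k as [|k IH]; intros c n.
  - unfold LDk; simpl; rewrite Nat.add_0_r; ring.
  - change (LDk alpha (S k) c n) with (LD alpha (LDk alpha k c) n); unfold LD; rewrite IH.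
    simpl LD_weight; rewrite RtoC_mult; replace (S n + k)%nat with (n + S k)%nat by lia.
    fold (LD_factor alpha n); ring.
Qed.

Lemma LD_weight_succ alpha k n :
  LD_weight alpha (S k) n = LD_weight alpha k n * LD_factor alpha (n + k).
Proof.
  revert n; induction k as [|k IH]; intros n; [simpl; rewrite Nat.add_0_r; ring|].
  change (LD_weight alpha (S (S k)) n) with (LD_factor alpha n * LD_weight alpha (S k) (S n)).
  rewrite IH; simpl; replace (S (n + k)) with (n + S k)%nat by lia; ring.
Qed.

Lemma init_val_eq alpha k c : init_val alpha k c = (RtoC (LD_weight alpha k 0) * c k)%C.
Proof. unfold init_val; rewrite psum_at_0, LDk_coef; reflexivity. Qed.

Lemma LDk_lin alpha k (l mu : C) c d n :
  LDk alpha k (fun n => (l * c n + mu * d n)%C) n = (l * LDk alpha k c n + mu * LDk alpha k d n)%C.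
Proof. rewrite !LDk_coef; ring. Qed.

Section LDWeight.

Variable alpha : R.
Hypothesis Halpha : 0 < alpha < 1.

Lemma LD_weight_pos k n : 0 < LD_weight alpha k n.
Proof.
  revert n; induction k as [|k IH]; intros n; simpl; [lra|].
  apply Rmult_lt_0_compat; [apply LD_factor_pos, Halpha | apply IH].
Qed.

Lemma LD_weight_gap L n j k : 1 <= L -> (forall i, (n <= i)%nat -> L <= LD_factor alpha i) ->
  (j < k)%nat -> LD_weight alpha j n * L <= LD_weight alpha k n.
Proof.
  intros HL HLi Hjk; induction k as [|k IH]; [lia|].
  rewrite LD_weight_succ; specialize (HLi (n + k)%nat ltac:(lia)).
  assert (Hj := LD_weight_pos j n); assert (Hk := LD_weight_pos k n).
  destruct (Nat.eq_dec j k) as [->|Hne]; [apply Rmult_le_compat_l; lra|].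
  specialize (IH ltac:(lia)); nra.
Qed.

Lemma RtoC_LD_weight_neq0 k n : RtoC (LD_weight alpha k n) <> 0%C.
Proof. intros H; injection H; apply Rgt_not_eq, LD_weight_pos. Qed.

Lemma entire_LD c : entire c -> entire (LD alpha c).
Proof.
  intros Hc r Hr; destruct (LD_factor_le_geometric alpha Halpha) as [A [B [HB HAB]]].
  destruct (Hc (r / B) ltac:(apply Rdiv_lt_0_compat; lra)) as [K HK].
  exists (A * K * (r / B)); intros n; unfold LD; fold (LD_factor alpha n).
  rewrite Cmod_mult, Cmod_R, Rabs_pos_eq by (apply Rlt_le, LD_factor_pos, Halpha).
  specialize (HK (S n)); specialize (HAB n).
  apply Rle_trans with (A * B ^ n * (K * (r / B) ^ S n)).
  - apply Rmult_le_compat; [apply Rlt_le, LD_factor_pos, Halpha | apply Cmod_ge_0 | |];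
      assumption.
  - unfold Rdiv; rewrite Rpow_mult_distr, pow_inv; simpl; right; field.
    split; [lra | apply pow_nonzero; lra].
Qed.

Lemma entire_LDk k c : entire c -> entire (LDk alpha k c).
Proof.
  intros Hc; induction k as [|k IH]; [exact Hc|].
  change (LDk alpha (S k) c) with (LD alpha (LDk alpha k c)); apply entire_LD, IH.
Qed.

End LDWeight.

Definition Csum (f : nat -> C) (l : list nat) : C := fold_right Cplus 0%C (map f l).

Lemma Csum_ext (f g : nat -> C) l : (forall j, In j l -> f j = g j) -> Csum f l = Csum g l.
Proof. intros H; unfold Csum; f_equal; apply map_ext_in, H. Qed.

Lemma Csum_lin (f g : nat -> C) (l mu : C) js :
  Csum (fun j => l * f j + mu * g j)%C js = (l * Csum f js + mu * Csum g js)%C.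
Proof. induction js as [|j js IH]; unfold Csum in *; cbn [fold_right map]; [|rewrite IH]; ring. Qed.

Lemma Csum_eq0 (f : nat -> C) js : (forall j, In j js -> f j = 0%C) -> Csum f js = 0%C.
Proof.
  intros H; rewrite (Csum_ext f (fun _ => 0%C)) by exact H; clear H.
  induction js as [|j js IH]; [reflexivity|].
  unfold Csum in *; cbn [fold_right map]; rewrite IH; apply Cplus_0_l.
Qed.

Lemma entire_Csum (h : nat -> nat -> C) js :
  (forall j, entire (h j)) -> entire (fun n => Csum (fun j => h j n) js).
Proof.
  intros Hh; induction js as [|j js IH]; [apply entire_zero|].
  apply entire_plus; [apply Hh | exact IH].
Qed.

Lemma psum_Csum (h : nat -> nat -> C) js t : (forall j, entire (h j)) ->
  psum (fun n => Csum (fun j => h j n) js) t = Csum (fun j => psum (h j) t) js.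
Proof.
  intros Hh; induction js as [|j js IH]; [apply psum_zero|].
  unfold Csum; simpl; rewrite psum_plus; [f_equal; exact IH | apply Hh | apply entire_Csum, Hh].
Qed.

Definition lhs_coef (alpha : R) (m : nat) (a c : nat -> C) (n : nat) : C :=
  (LDk alpha m c n + Csum (fun j => a j * LDk alpha j c n) (seq 0 m))%C.

Lemma lhs_coef_lin alpha m a (l mu : C) c d n :
  lhs_coef alpha m a (fun n => (l * c n + mu * d n)%C) n
  = (l * lhs_coef alpha m a c n + mu * lhs_coef alpha m a d n)%C.
Proof.
  unfold lhs_coef; rewrite LDk_lin.
  rewrite (Csum_ext _ (fun j => l * (a j * LDk alpha j c n) + mu * (a j * LDk alpha j d n))%C)
    by (intros j _; rewrite LDk_lin; ring).
  rewrite Csum_lin; ring.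
Qed.

Section LhsCoef.

Variables (alpha : R) (m : nat) (a c : nat -> C).
Hypothesis Halpha : 0 < alpha < 1.
Hypothesis Hc : entire c.

Lemma entire_lhs_coef : entire (lhs_coef alpha m a c).
Proof.
  apply entire_plus; [apply entire_LDk; assumption|].
  apply entire_Csum; intros j; apply entire_scal, entire_LDk; assumption.
Qed.

Lemma psum_lhs_coef t : psum (lhs_coef alpha m a c) t
  = (psum (LDk alpha m c) t + Csum (fun j => a j * psum (LDk alpha j c) t) (seq 0 m))%C.
Proof.
  unfold lhs_coef; rewrite psum_plus, psum_Csum.
  - f_equal; apply Csum_ext; intros j _; apply psum_scal, entire_LDk; assumption.
  - intros j; apply entire_scal, entire_LDk; assumption.
  - apply entire_LDk; assumption.
  - apply entire_Csum; intros j; apply entire_scal, entire_LDk; assumption.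
Qed.

End LhsCoef.

Lemma IsSolution_iff alpha m a c : 0 < alpha < 1 ->
  IsSolution alpha m a c <-> entire c /\ forall n, lhs_coef alpha m a c n = 0%C.
Proof.
  intros Halpha; unfold IsSolution; split.
  - intros [Hconv Heq]; assert (Hc := conv_on_nonneg_entire c Hconv); split; [exact Hc|].
    apply psum_coef_eq0; [apply entire_lhs_coef; assumption|].
    intros t Ht; rewrite psum_lhs_coef by assumption; apply Heq, Ht.
  - intros [Hc Hzero]; split; [apply entire_conv_on_nonneg, Hc|].
    intros t _; fold (Csum (fun j => (a j * psum (LDk alpha j c) t)%C) (seq 0 m)).
    rewrite <- psum_lhs_coef by assumption.
    rewrite (functional_extensionality _ _ Hzero); apply psum_zero.
Qed.

Lemma solution_coef_eq0 alpha m a e : 0 < alpha < 1 -> (forall n, lhs_coef alpha m a e n = 0%C) ->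
  (forall k, (k < m)%nat -> e k = 0%C) -> forall n, e n = 0%C.
Proof.
  intros Halpha Hlhs Hinit k; induction k as [k IH] using lt_wf_ind.
  destruct (lt_dec k m) as [Hk|Hk]; [apply Hinit, Hk|].
  replace k with ((k - m) + m)%nat in * by lia; set (n := (k - m)%nat).
  specialize (Hlhs n); unfold lhs_coef in Hlhs.
  rewrite Csum_eq0, Cplus_0_r, LDk_coef in Hlhs
    by (intros j Hj; apply in_seq in Hj; rewrite LDk_coef, IH by lia; ring).
  transitivity (/ RtoC (LD_weight alpha m n) * (RtoC (LD_weight alpha m n) * e (n + m)%nat))%C.
  - field; apply RtoC_LD_weight_neq0, Halpha.
  - rewrite Hlhs; ring.
Qed.

(** * Solutions with prescribed initial values *)

Lemma entire_of_small_radii c :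
  (forall r, 0 < r <= 1 -> exists K, forall n, Cmod (c n) <= K * r ^ n) -> entire c.
Proof.
  intros Hc r Hr; assert (Hr' : 0 < Rmin r 1 <= 1) by (split; [apply Rmin_pos | apply Rmin_r]; lra).
  destruct (Hc (Rmin r 1) Hr') as [K HK]; exists (Rmax K 0); intros n.
  apply Rle_trans with (Rmax K 0 * Rmin r 1 ^ n).
  - eapply Rle_trans; [apply HK | apply Rmult_le_compat_r; [apply pow_le; lra | apply Rmax_l]].
  - apply Rmult_le_compat_l; [apply Rmax_r|]; apply pow_incr; split; [lra | apply Rmin_l].
Qed.

Lemma geometric_bound_of_step (u : nat -> R) m N r : 0 < r ->
  (forall n K, (N <= n)%nat -> 0 <= K ->
     (forall j, (j < m)%nat -> u (n + j)%nat <= K * r ^ (n + j)) ->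
     u (n + m)%nat <= K * r ^ (n + m)) ->
  exists K, forall n, u n <= K * r ^ n.
Proof.
  intros Hr Hstep; destruct (upper_bound_on_prefix (fun n => u n / r ^ n) (N + m)) as [K0 HK0].
  exists (Rmax K0 0); intros k; induction k as [k IH] using lt_wf_ind.
  assert (Hrk : 0 < r ^ k) by (apply pow_lt, Hr).
  destruct (lt_dec k (N + m)) as [Hk|Hk].
  - specialize (HK0 k Hk); simpl in HK0.
    apply (Rmult_le_reg_r (/ r ^ k)); [apply Rinv_0_lt_compat, Hrk|].
    rewrite Rmult_assoc, Rinv_r, Rmult_1_r by lra.
    eapply Rle_trans; [exact HK0 | apply Rmax_l].
  - replace k with ((k - m) + m)%nat by lia.
    apply Hstep; [lia | apply Rmax_r|]; intros j Hj; apply IH; lia.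
Qed.

Lemma Cmod_Csum_le_weighted (f : nat -> C) (w : nat -> R) B js :
  (forall j, In j js -> Cmod (f j) <= w j * B) ->
  Cmod (Csum f js) <= fold_right Rplus 0 (map w js) * B.
Proof.
  induction js as [|j js IH]; intros Hf; unfold Csum in *; cbn [fold_right map].
  - rewrite Cmod_0; lra.
  - eapply Rle_trans; [apply Cmod_triangle|].
    rewrite Rmult_plus_distr_r; apply Rplus_le_compat; [apply Hf; left; reflexivity|].
    apply IH; intros i Hi; apply Hf; right; exact Hi.
Qed.

Section Recurrence.

Variable alpha : R.
Variable m : nat.
Variable a : nat -> C.
Hypothesis Halpha : 0 < alpha < 1.
Hypothesis Hm : (1 <= m)%nat.

(* The value of [c (n + m)] forced by [lhs_coef c n = 0], given [w j = c (n + j)] for [j < m]. *)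
Definition next_coef (n : nat) (w : nat -> C) : C :=
  (- Csum (fun j => a j * (RtoC (LD_weight alpha j n) * w j)) (seq 0 m)
   / RtoC (LD_weight alpha m n))%C.

(* [window v n j] is [c (n + j)] for [j < m], where [c] solves the recurrence with
   initial values [v]: the window slides by one step at a time. *)
Fixpoint window (v : nat -> C) (n : nat) : nat -> C :=
  match n with
  | O => fun j => (v j / RtoC (LD_weight alpha j 0))%C
  | S n' => fun j =>
      if Nat.ltb (j + 1) m then window v n' (j + 1) else next_coef n' (window v n')
  end.

Definition solution_seq (v : nat -> C) (n : nat) : C := window v n 0.

Lemma window_eq v j n : (j < m)%nat -> window v n j = solution_seq v (n + j).
Proof.
  revert n; induction j as [|j IH]; intros n Hj.
  { unfold solution_seq; rewrite Nat.add_0_r; reflexivity. }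
  replace (n + S j)%nat with (S n + j)%nat by lia; rewrite <- IH by lia; simpl.
  destruct (Nat.ltb_spec (j + 1) m); [f_equal; lia | lia].
Qed.

Lemma solution_seq_rec v n : solution_seq v (n + m) = next_coef n (window v n).
Proof.
  replace (n + m)%nat with (S n + (m - 1))%nat by lia; rewrite <- window_eq by lia; simpl.
  destruct (Nat.ltb_spec (m - 1 + 1) m); [lia | reflexivity].
Qed.

Lemma lhs_coef_solution_seq v n : lhs_coef alpha m a (solution_seq v) n = 0%C.
Proof.
  unfold lhs_coef; rewrite LDk_coef, solution_seq_rec.
  rewrite (Csum_ext _ (fun j => a j * (RtoC (LD_weight alpha j n) * window v n j))%C).
  - unfold next_coef; field; apply (RtoC_LD_weight_neq0 alpha Halpha).
  - intros j Hj; apply in_seq in Hj; rewrite LDk_coef, window_eq by lia; reflexivity.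
Qed.

Lemma init_val_solution_seq v k : (k < m)%nat -> init_val alpha k (solution_seq v) = v k.
Proof.
  intros Hk; rewrite init_val_eq, <- (Nat.add_0_l k), <- window_eq by exact Hk; simpl.
  field; apply (RtoC_LD_weight_neq0 alpha Halpha).
Qed.

(* From the index where [LD_factor >= L] on, [|c (n + m)| <= (sum_j |a j|) / L * max_j |c (n + j)|],
   and [L] is chosen so that this contracts by [r ^ m]. *)
Lemma entire_solution_seq v : entire (solution_seq v).
Proof.
  apply entire_of_small_radii; intros r Hr.
  set (c := solution_seq v); set (SA := fold_right Rplus 0 (map (fun j => Cmod (a j)) (seq 0 m))).
  assert (Hrm : 0 < r ^ m) by (apply pow_lt; lra).
  set (L := Rmax 1 (SA / r ^ m)); assert (HL1 : 1 <= L) by apply Rmax_l.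
  assert (HSA : SA / L <= r ^ m).
  { apply (Rmult_le_reg_r L); [lra|]; unfold Rdiv; rewrite Rmult_assoc, Rinv_l, Rmult_1_r by lra.
    assert (H := Rmax_r 1 (SA / r ^ m)); fold L in H.
    apply (Rmult_le_compat_r (r ^ m)) in H; [|lra].
    unfold Rdiv in H; rewrite Rmult_assoc, Rinv_l, Rmult_1_r in H by lra; lra. }
  destruct (LD_factor_unbounded alpha Halpha L) as [N HN].
  apply (geometric_bound_of_step (fun n => Cmod (c n)) m N r); [lra|].
  intros n K HnN HK Hprev; simpl in Hprev |- *; unfold c; rewrite solution_seq_rec; fold c.
  set (Pm := LD_weight alpha m n); assert (HPm : 0 < Pm) by apply LD_weight_pos, Halpha.
  assert (Hrn : 0 <= r ^ n) by (apply pow_le; lra).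
  assert (Hterm : forall j, In j (seq 0 m) ->
            Cmod (a j * (RtoC (LD_weight alpha j n) * window v n j))
            <= Cmod (a j) * (Pm / L * (K * r ^ n))).
  { intros j Hj; apply in_seq in Hj; rewrite window_eq by lia; fold c.
    rewrite !Cmod_mult, Cmod_R, Rabs_pos_eq by (apply Rlt_le, LD_weight_pos, Halpha).
    apply Rmult_le_compat_l; [apply Cmod_ge_0|].
    apply Rmult_le_compat; [apply Rlt_le, LD_weight_pos, Halpha | apply Cmod_ge_0 | |].
    - apply (Rmult_le_reg_r L); [lra|]; unfold Rdiv; rewrite Rmult_assoc, Rinv_l, Rmult_1_r by lra.
      apply LD_weight_gap; [exact Halpha | exact HL1 | intros i Hi; apply HN; lia | lia].
    - eapply Rle_trans; [apply Hprev; lia|]; rewrite pow_add; apply Rmult_le_compat_l; [exact HK|].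
      rewrite <- (Rmult_1_r (r ^ n)) at 2; apply Rmult_le_compat_l; [exact Hrn|].
      rewrite <- (pow1 j); apply pow_incr; lra. }
  unfold next_coef, Cdiv; fold Pm.
  rewrite Cmod_mult, Cmod_opp, Cmod_inv, Cmod_R, Rabs_pos_eq
    by (try apply (RtoC_LD_weight_neq0 alpha Halpha); lra).
  apply Rle_trans with (SA * (Pm / L * (K * r ^ n)) * / Pm).
  - apply Rmult_le_compat_r; [apply Rlt_le, Rinv_0_lt_compat, HPm|].
    apply Cmod_Csum_le_weighted, Hterm.
  - replace (SA * (Pm / L * (K * r ^ n)) * / Pm) with (SA / L * (K * r ^ n)) by (field; lra).
    apply Rle_trans with (r ^ m * (K * r ^ n)); [|rewrite pow_add; right; ring].
    apply Rmult_le_compat_r; [apply Rmult_le_pos|]; assumption.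
Qed.

Lemma IsSolution_solution_seq v : IsSolution alpha m a (solution_seq v).
Proof.
  apply IsSolution_iff; [exact Halpha|].
  split; [apply entire_solution_seq | intros n; apply lhs_coef_solution_seq].
Qed.

End Recurrence.

Section SolutionSpace.

Variable alpha : R.
Variable m : nat.
Variable a : nat -> C.
Hypothesis Halpha : 0 < alpha < 1.

Lemma IsSolution_zero : IsSolution alpha m a (fun _ => 0%C).
Proof.
  apply IsSolution_iff; [exact Halpha|]; split; [apply entire_zero|]; intros n.
  unfold lhs_coef; rewrite Csum_eq0 by (intros j _; rewrite LDk_coef; ring).
  rewrite LDk_coef; ring.
Qed.

Lemma IsSolution_lin (l mu : C) c d : IsSolution alpha m a c -> IsSolution alpha m a d ->
  IsSolution alpha m a (fun n => (l * c n + mu * d n)%C).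
Proof.
  rewrite !IsSolution_iff by exact Halpha; intros [Hc Hc0] [Hd Hd0].
  split; [apply entire_plus; apply entire_scal; assumption|].
  intros n; rewrite lhs_coef_lin, Hc0, Hd0; ring.
Qed.

Lemma IsSolution_eq_of_init_val c d : IsSolution alpha m a c -> IsSolution alpha m a d ->
  (forall k, (k < m)%nat -> init_val alpha k c = init_val alpha k d) -> c = d.
Proof.
  intros Hc Hd Hinit; set (e n := (1 * c n + -1 * d n)%C).
  assert (He : IsSolution alpha m a e) by (apply IsSolution_lin; assumption).
  rewrite IsSolution_iff in He by exact Halpha.
  assert (Hzero : forall n, e n = 0%C).
  { apply (solution_coef_eq0 alpha m a e Halpha); [apply He|]; intros k Hk.
    specialize (Hinit k Hk); rewrite !init_val_eq in Hinit.
    transitivity (/ RtoC (LD_weight alpha k 0)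
                  * (RtoC (LD_weight alpha k 0) * c k - RtoC (LD_weight alpha k 0) * d k))%C.
    - unfold e; field; apply RtoC_LD_weight_neq0, Halpha.
    - rewrite Hinit; ring. }
  apply functional_extensionality; intros n.
  transitivity (e n + d n)%C; [unfold e; ring | rewrite Hzero; ring].
Qed.

End SolutionSpace.

Theorem mainTheorem16 (alpha : R) (m : nat) (a : nat -> C) :
  0 < alpha < 1 -> (1 <= m)%nat ->
  IsSolution alpha m a (fun _ => 0%C) /\
  (forall c d, IsSolution alpha m a c -> IsSolution alpha m a d ->
     IsSolution alpha m a (fun n => (c n + d n)%C)) /\
  (forall (l : C) c, IsSolution alpha m a c ->
     IsSolution alpha m a (fun n => (l * c n)%C)) /\
  (forall (l mu : C) c d, IsSolution alpha m a c -> IsSolution alpha m a d ->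
     forall k, (k < m)%nat ->
       init_val alpha k (fun n => (l * c n + mu * d n)%C)
       = (l * init_val alpha k c + mu * init_val alpha k d)%C) /\
  (forall v : nat -> C, exists c, IsSolution alpha m a c /\
     forall k, (k < m)%nat -> init_val alpha k c = v k) /\
  (forall c d, IsSolution alpha m a c -> IsSolution alpha m a d ->
     (forall k, (k < m)%nat -> init_val alpha k c = init_val alpha k d) -> c = d).
Proof.
  intros Halpha Hm.
  split; [apply IsSolution_zero, Halpha|].
  split.
  { intros c d Hc Hd; replace (fun n => (c n + d n)%C) with (fun n => (1 * c n + 1 * d n)%C)
      by (apply functional_extensionality; intros; ring).
    apply IsSolution_lin; assumption. }
  split.
  { intros l c Hc; replace (fun n => (l * c n)%C) with (fun n => (l * c n + 0 * c n)%C)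
      by (apply functional_extensionality; intros; ring).
    apply IsSolution_lin; assumption. }
  split; [intros l mu c d _ _ k _; rewrite !init_val_eq; ring|].
  split; [|apply IsSolution_eq_of_init_val, Halpha].
  intros v; exists (solution_seq alpha m a v); split.
  - apply IsSolution_solution_seq; assumption.
  - intros k Hk; apply init_val_solution_seq; assumption.
Qed.
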